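(* Let $n\ge1$, $\mathbf{A}=\{a_1,\dots,a_n\}$, and let $\mathbf{S}_2^n=\{XY : X,Y\in\mathbf{A}^*\setminus\{\emptyset\},\ \overline{\nu}(X)=\overline{\nu}(Y)\}$. Then no minimal crucial word with respect to $\mathbf{S}_2^n$ contains three distinct letters each of which occurs exactly twice in the word.
   Context: A word over $\mathbf{A}$ is a finite sequence of letters; $\mathbf{A}^*$ is the set of all words. A subword is a block of consecutive letters. For a word $X$, the content vector is $\overline{\nu}(X)=(\nu_1(X),\dots,\nu_n(X))$, where $\nu_i(X)$ is the number of occurrences of $a_i$ in $X$. For $\mathbf{S}\subseteq\mathbf{A}^*$, a word is free from $\mathbf{S}$ if none of its subwords belongs to $\mathbf{S}$. A word $X$ free from $\mathbf{S}$ is crucial with respect to $\mathbf{S}$ if for every letter $a\in\mathbf{A}$ the word $Xa$ contains a subword belonging to $\mathbf{S}$. A minimal crucial word is a crucial word of smallest possible length. *)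

From mathcomp Require Import all_boot.
Set Implicit Arguments. Unset Strict Implicit. Unset Printing Implicit Defensive.

Definition word (n : nat) := seq 'I_n.

(* content vector: nu_i(X) = count_mem i X *)
Definition content_eq (n : nat) (X Y : word n) : Prop :=
  forall a : 'I_n, count_mem a X = count_mem a Y.

Definition in_S2 (n : nat) (w : word n) : Prop :=
  exists X Y : word n, X <> [::] /\ Y <> [::] /\ w = X ++ Y /\ content_eq X Y.

Definition has_S2_subword (n : nat) (w : word n) : Prop :=
  exists u : word n, infix u w /\ in_S2 u.

Definition free_S2 (n : nat) (w : word n) : Prop := ~ has_S2_subword w.

Definition crucial_S2 (n : nat) (w : word n) : Prop :=
  free_S2 w /\ forall a : 'I_n, has_S2_subword (rcons w a).

Definition minimal_crucial_S2 (n : nat) (w : word n) : Prop :=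
  crucial_S2 w /\ forall v : word n, crucial_S2 v -> size w <= size v.

From mathcomp Require Import all_boot zify.
Set Implicit Arguments. Unset Strict Implicit. Unset Printing Implicit Defensive.

(* If w is crucial, every extension w x ends with an abelian
   square X Y x, |X| = |Y x| = h x + 1, so the window of the last 2 h x + 1
   letters of w contains each letter y exactly 2 m + [x = y] times, where m
   counts y in the last h x letters.  Take z with h z maximal.  Comparing these
   identities shows that at most two letters other than z occur exactly twice
   in the window of z; a letter occurring twice in w lies there whenever it is
   not z.  Hence among three letters occurring twice, one is z and every other
   letter occurs at least twice in the last h z letters, which forces
   |w| >= 2 h z + 2 >= 4 n - 6.
   Upper bound.  An explicit crucial word of length 4 n - 7 exists for n >= 3,
   so such a w is not minimal. *)

Section Infixes.
Variable T : eqType.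
Implicit Types s x y : seq T.

Lemma prefix_cat_cons s x c y :
  prefix s (x ++ c :: y) -> prefix s x \/ exists2 t, s = x ++ c :: t & prefix t y.
Proof.
elim: x s => [|b x IH] [|a s] //=; try by left.
  by case/andP=> /eqP-> ps; right; exists s.
case/andP=> /eqP-> /IH[ps|[t -> pt]]; first by left; rewrite eqxx.
by right; exists t.
Qed.

Lemma infix_cat_cons s x c y :
  infix s (x ++ c :: y) ->
  [\/ infix s x, infix s y |
      exists x' y', [/\ s = x' ++ c :: y', suffix x' x & prefix y' y]].
Proof.
elim: x => [|b x IH] /=.
  case/orP=> [|sy]; last by constructor 2.
  case: s => [|a s] /=; first by constructor 1.
  by case/andP=> /eqP-> ps; constructor 3; exists [::], s.
case/orP=> [ps|].
  case: (@prefix_cat_cons s (b :: x) c y ps) => [p|[t -> pt]].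
    by constructor 1; move: (prefixW p).
  by constructor 3; exists (b :: x), t; rewrite suffix_refl.
case/IH=> [sx|sy|[x' [y' [-> sx py]]]].
- by constructor 1; rewrite /= sx orbT.
- by constructor 2.
constructor 3; exists x', y'; split=> //.
exact: suffix_trans sx (suffix_cons _ _).
Qed.

End Infixes.

Lemma leq_count_infix (T : eqType) (P : pred T) s t :
  infix s t -> count P s <= count P t.
Proof. by move/infixW; apply: leq_count_subseq. Qed.

Lemma count_cons (T : Type) (P : pred T) x s : count P (x :: s) = P x + count P s.
Proof. by []. Qed.

Lemma count_iota x a c : count_mem x (iota a c) = (a <= x < a + c).
Proof. by rewrite count_uniq_mem ?iota_uniq // mem_iota. Qed.

Section AbelianSquares.
Variable T : eqType.
Implicit Types u w x y : seq T.

Definition abelian_square u :=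
  exists X Y, [/\ X <> [::], Y <> [::], u = X ++ Y & perm_eq X Y].

Definition abelian_square_free w := forall u, infix u w -> ~ abelian_square u.

Lemma abelian_square_count_even u a : abelian_square u -> ~~ odd (count_mem a u).
Proof.
case=> X [Y [_ _ -> /permP eqXY]].
by rewrite count_cat eqXY addnn odd_double.
Qed.

Lemma abelian_square_size u : abelian_square u -> 2 <= size u.
Proof. by case=> [[|? X] [[|? Y] [//= _ _ -> _]]]; rewrite /= size_cat /=; lia. Qed.

Lemma odd_count_abelian_square u a : odd (count_mem a u) -> ~ abelian_square u.
Proof. by move=> odd_a /(abelian_square_count_even a); rewrite odd_a. Qed.

Lemma abelian_square_free_small w : size w <= 1 -> abelian_square_free w.
Proof. by move=> small u /size_infix le_uw /abelian_square_size; lia. Qed.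

Lemma abelian_square_free_uniq w : uniq w -> abelian_square_free w.
Proof.
move=> uniq_w u /infix_uniq/(_ uniq_w) uniq_u sq_u.
case: u uniq_u sq_u (abelian_square_size sq_u) => // a u uniq_u sq_u _.
by apply: (odd_count_abelian_square (a := a) _ sq_u); rewrite count_uniq_mem // inE eqxx.
Qed.

Lemma abelian_square_free_cat_cons x c y :
  abelian_square_free x -> abelian_square_free y ->
  (forall x' y', suffix x' x -> prefix y' y ->
     exists a, odd (count_mem a (x' ++ c :: y'))) ->
  abelian_square_free (x ++ c :: y).
Proof.
move=> free_x free_y crossing u /infix_cat_cons[ux|uy|[x' [y' [-> sx py]]]].
- exact: free_x.
- exact: free_y.
by have [a odd_a] := crossing _ _ sx py; apply: odd_count_abelian_square odd_a.
Qed.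

Lemma abelian_square_free_fresh x c y :
  c \notin x -> c \notin y -> abelian_square_free x -> abelian_square_free y ->
  abelian_square_free (x ++ c :: y).
Proof.
move=> cx cy free_x free_y; apply: abelian_square_free_cat_cons => // x' y' sx py.
exists c; rewrite count_cat /= eqxx.
have /count_memPn-> : c \notin x' by apply: contra cx; apply: (mem_infix (suffixW sx)).
have /count_memPn-> : c \notin y' by apply: contra cy; apply: (mem_infix (prefixW py)).
by [].
Qed.

End AbelianSquares.

Lemma abelian_square_map (T U : eqType) (f : T -> U) u :
  abelian_square u -> abelian_square (map f u).
Proof.
case=> X [Y [nX nY -> pXY]]; exists (map f X), (map f Y).
by split; rewrite ?map_cat ?perm_map //; case: (X) nX; case: (Y) nY.
Qed.

Lemma abelian_square_free_map (T U : eqType) (f : T -> U) w :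
  abelian_square_free (map f w) -> abelian_square_free w.
Proof.
move=> free_fw u /infixP[p [q ew]] /(abelian_square_map f); apply: free_fw.
by apply/infixP; exists (map f p), (map f q); rewrite ew !map_cat.
Qed.

Section TailCount.
Variable T : eqType.
Implicit Types w : seq T.

Definition tail_count w t y := count_mem y (drop (size w - t) w).

Lemma count_drop_le w k y : count_mem y (drop k w) <= count_mem y w.
Proof. by rewrite -[in X in _ <= X](cat_take_drop k w) count_cat leq_addl. Qed.

Lemma tail_count_le w t y : tail_count w t y <= count_mem y w.
Proof. exact: count_drop_le. Qed.

Lemma leq_tail_count w t1 t2 y : t1 <= t2 -> tail_count w t1 y <= tail_count w t2 y.
Proof.
move=> le_t; rewrite /tail_count.
have -> : size w - t1 = (size w - t1 - (size w - t2)) + (size w - t2) by lia.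
by rewrite -drop_drop count_drop_le.
Qed.

Lemma tail_count_full w t y : size w <= t -> tail_count w t y = count_mem y w.
Proof. by move=> le_wt; rewrite /tail_count (_ : size w - t = 0) ?drop0 //; lia. Qed.

(* The abelian square [X Y' x] ending [rcons w x] has [size Y' = h]. *)
Lemma abelian_square_free_rcons w x :
  abelian_square_free w ->
  (exists u, infix u (rcons w x) /\ abelian_square u) ->
  exists h, forall y, tail_count w (2 * h + 1) y = 2 * tail_count w h y + (x == y).
Proof.
move=> free_w [u [/infixP[p [q ew]] sq_u]].
case/lastP: q ew => [|q e] ew; last first.
  exfalso; apply: (free_w u) sq_u; apply/infixP; exists p, q.
  by move: ew; rewrite -!rcons_cat => /rcons_inj[].
case: sq_u ew => X [Y' [_ nY' -> pXY]].
case/lastP: Y' nY' pXY => [//|Y e] _ pXY.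
rewrite cats0 -!rcons_cat => /rcons_inj[ew ex].
have sizeX : size X = (size Y).+1 by rewrite (perm_size pXY) size_rcons.
exists (size Y) => y; rewrite /tail_count.
have -> : drop (size w - size Y) w = Y.
  by rewrite ew catA drop_size_cat // !size_cat; lia.
have -> : drop (size w - (2 * size Y + 1)) w = X ++ Y.
  by rewrite ew drop_size_cat // !size_cat; lia.
by rewrite count_cat (permP pXY) -cats1 count_cat /= ex addn0; lia.
Qed.

End TailCount.

Lemma size_sum_count_mem (T : finType) (s : seq T) :
  size s = \sum_(y : T) count_mem y s.
Proof.
elim: s => [|x s IH] /=; first by rewrite big1.
rewrite big_split /= -IH (bigD1 x) //= eqxx big1 ?addn0 ?add1n // => y /negbTE.
by rewrite eq_sym => ->.
Qed.

Section SquareLengths.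
Variables (T : finType) (w : seq T) (h : T -> nat).
Hypothesis tail_square :
  forall x y, tail_count w (2 * h x + 1) y = 2 * tail_count w (h x) y + (x == y).

Lemma square_length_inj : injective h.
Proof.
move=> x y hxy; have := tail_square x x; have := tail_square y x.
by rewrite hxy eqxx; case: eqP => [->|_] //; lia.
Qed.

Variable z : T.
Hypothesis h_max : forall y, h y <= h z.

Lemma window_count_pos y : 0 < tail_count w (2 * h z + 1) y.
Proof.
have := tail_square y y; rewrite eqxx => ey.
have := @leq_tail_count _ w (2 * h y + 1) (2 * h z + 1) y.
by have := h_max y; lia.
Qed.

Definition twice_in_window y := y != z /\ tail_count w (2 * h z + 1) y = 2.

Lemma twice_in_window_counts y : twice_in_window y ->
  tail_count w (2 * h y + 1) y = 1 /\ tail_count w (h z) y = 1.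
Proof.
case=> yz ez; have := tail_square z y; have := tail_square y y.
rewrite eqxx eq_sym (negbTE yz) ez.
have := @leq_tail_count _ w (2 * h y + 1) (2 * h z + 1) y.
by have := h_max y; rewrite ez; lia.
Qed.

(* Otherwise either the window of [y'] lies inside the last [h z] letters and
   contains [y] twice, or the window of [y] contains them and [y'] just once. *)
Lemma twice_in_window_lengths y y' :
  twice_in_window y -> twice_in_window y' -> h y < h y' ->
  h z <= 2 * h y' /\ 2 * h y + 2 <= h z.
Proof.
move=> /twice_in_window_counts[wy zy] /twice_in_window_counts[wy' zy'] lt_yy'.
have ne_yy' : y != y' by apply: contraTneq lt_yy' => ->; rewrite ltnn.
have mono := @leq_tail_count _ w; split; rewrite leqNgt; apply/negP => lt_z.
- have := tail_square y' y; rewrite eq_sym (negbTE ne_yy').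
  have := mono (2 * h y + 1) (2 * h y' + 1) y.
  have := mono (2 * h y' + 1) (h z) y; lia.
- have := tail_square y y'; rewrite (negbTE ne_yy').
  have := mono (h z) (2 * h y + 1) y'.
  have := mono (2 * h y + 1) (2 * h y' + 1) y'; lia.
Qed.

(* For h y1 < h y2 < h y3 the bounds give 2 h y2 + 2 <= h z <= 2 h y2. *)
Lemma no_three_twice_in_window y1 y2 y3 :
  twice_in_window y1 -> twice_in_window y2 -> twice_in_window y3 ->
  [/\ y1 != y2, y1 != y3 & y2 != y3] -> False.
Proof.
move=> t1 t2 t3 [/eqP n12 /eqP n13 /eqP n23].
have inj := @square_length_inj; have L := twice_in_window_lengths.
have := L _ _ t1 t2; have := L _ _ t2 t1; have := L _ _ t1 t3.
have := L _ _ t3 t1; have := L _ _ t2 t3; have := L _ _ t3 t2.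
have /eqP := contra_not_neq (@inj y1 y2) n12.
have /eqP := contra_not_neq (@inj y1 y3) n13.
have /eqP := contra_not_neq (@inj y2 y3) n23.
lia.
Qed.

Lemma twice_in_window_of_count y :
  y != z -> count_mem y w = 2 -> twice_in_window y.
Proof.
move=> yz cy; split=> //; have := tail_square z y; rewrite eq_sym (negbTE yz).
by have := tail_count_le w (2 * h z + 1) y; have := window_count_pos y; lia.
Qed.

Lemma window_size_lt : count_mem z w = 2 -> 2 * h z + 2 <= size w.
Proof.
move=> cz; rewrite leqNgt; apply/negP => lt_w.
by have := tail_square z z; rewrite eqxx tail_count_full ?cz /=; lia.
Qed.

(* Every letter other than z, b, c occurs at least twice among the last [h z]
   letters, otherwise it would be a third letter twice in the window. *)
Lemma window_size_bound b c : count_mem z w = 2 ->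
  twice_in_window b -> twice_in_window c -> b != c -> 4 * #|T| <= size w + 6.
Proof.
move=> cz tb tc bc; have big := window_size_lt cz.
have per_letter y : 2 <= tail_count w (h z) y + 2 * (y == z) + (y == b) + (y == c).
  case: (eqVneq y z) => [|yz] /=; first lia.
  have := tail_square z y.
  rewrite eq_sym (negbTE yz) addn0; have := window_count_pos y.
  case: (eqVneq y b) => [|yb] /=; first lia.
  case: (eqVneq y c) => [|yc] /=; first lia.
  rewrite leqNgt => pos ez; apply/negP => lt1.
  apply: (no_three_twice_in_window tb tc (y3 := y)); first by split=> //; lia.
  by rewrite bc eq_sym yb eq_sym yc.
have sum_tail : \sum_(y : T) tail_count w (h z) y = h z.
  by rewrite -size_sum_count_mem size_drop subKn //; apply: leq_trans big; lia.
have : \sum_(y : T) 2 <=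
        \sum_(y : T) (tail_count w (h z) y + 2 * (y == z) + (y == b) + (y == c)).
  by apply: leq_sum => y _; apply: per_letter.
have sum_indicator a : \sum_(y : T) (y == a) = 1.
  by rewrite (bigD1 a) //= eqxx big1 // => y /negbTE ->.
have -> : \sum_(y : T) 2 = #|T| * 2 by rewrite sum_nat_const.
rewrite 3!big_split -big_distrr /= sum_tail !sum_indicator => le_card.
by apply: (@leq_trans (2 * h z + 2 + 6)); [lia | rewrite leq_add2r].
Qed.

End SquareLengths.

Lemma crucial_twice_letters_size (T : finType) (w : seq T) a b c :
  abelian_square_free w ->
  (forall x, exists u, infix u (rcons w x) /\ abelian_square u) ->
  [/\ a != b, a != c & b != c] ->
  count_mem a w = 2 -> count_mem b w = 2 -> count_mem c w = 2 ->
  4 * #|T| <= size w + 6.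
Proof.
move=> free_w crucial_w [ab ac bc] ca cb cc.
have /fin_all_exists[h tail_square] x := abelian_square_free_rcons free_w (crucial_w x).
have [z _ /(_ _ isT) h_max] := @arg_maxnP _ a xpredT h isT.
have twice y := twice_in_window_of_count tail_square h_max (y := y).
have bound := window_size_bound tail_square h_max.
case: (eqVneq a z) => [eaz|az].
  by subst z; apply: bound ca (twice b _ cb) (twice c _ cc) bc; rewrite eq_sym.
case: (eqVneq b z) => [ebz|bz].
  by subst z; apply: bound cb (twice a az ca) (twice c _ cc) ac; rewrite eq_sym.
case: (eqVneq c z) => [ecz|cz].
  by subst z; apply: bound cc (twice a az ca) (twice b bz cb) ab.
by case: (no_three_twice_in_window tail_square h_max
            (twice a az ca) (twice b bz cb) (twice c cz cc)).
Qed.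

Definition stairs a c : seq nat := flatten [seq [:: x.+1; x] | x <- iota a c].

Lemma stairsD a i j : stairs a (i + j) = stairs a i ++ stairs (a + i) j.
Proof. by rewrite /stairs iotaD map_cat flatten_cat. Qed.

Lemma stairsS a c : stairs a c.+1 = stairs a c ++ [:: (a + c).+1; a + c].
Proof. by rewrite -addn1 stairsD. Qed.

Lemma size_stairs a c : size (stairs a c) = 2 * c.
Proof. by elim: c => [|c IH] //; rewrite stairsS size_cat IH /=; lia. Qed.

Lemma count_stairs x a c :
  count_mem x (stairs a c) = (a < x <= a + c) + (a <= x < a + c).
Proof.
elim: c => [|c IH]; first by rewrite /=; lia.
by rewrite stairsS count_cat IH /=; lia.
Qed.

Lemma abelian_square_free_stairs a c : abelian_square_free (stairs a c).
Proof.
elim: c => [|c IH]; first exact: abelian_square_free_small.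
rewrite stairsS; apply: abelian_square_free_fresh => //.
- by apply/count_memPn; rewrite count_stairs; lia.
- by rewrite inE; lia.
- exact: abelian_square_free_small.
Qed.

(* The least letter of a nonempty suffix of [stairs a c] occurs in it once. *)
Lemma stairs_drop_single a c i : i < 2 * c ->
  exists2 j, a <= j < a + c & count_mem j (drop i (stairs a c)) = 1.
Proof.
elim: c => [|c IH] // lt_i; rewrite stairsS drop_cat size_stairs.
case: ltnP => [/IH[j range_j cj]|ge_i].
  by exists j; [lia | rewrite count_cat cj /=; lia].
exists (a + c); first lia.
have : i - 2 * c < 2 by lia.
by case: (i - 2 * c) => [|[|?]] //= _; lia.
Qed.

Lemma ends_with_abelian_square (T : eqType) (s P X Y : seq T) :
  X <> [::] -> Y <> [::] -> (forall y, count_mem y X = count_mem y Y) ->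
  s = P ++ X ++ Y -> exists u, infix u s /\ abelian_square u.
Proof.
move=> nX nY cXY ->; exists (X ++ Y); split; first exact: suffix_infix.
by exists X, Y; split=> //; apply/allP => y _; apply/eqP.
Qed.

Section CrucialWord.
Variable k : nat.

Definition run := iota 3 k.+1.

Definition crucial_tail := (k + 3) :: 2 :: run ++ 1 :: run ++ [:: 2].

(* [crucial_word = 3 0 (4 3) (5 4) ... (k+3 k+2) 1 (k+3) 2 3 ... k+3 1 3 ... k+3 2] *)
Definition crucial_word := 3 :: 0 :: stairs 3 k ++ 1 :: crucial_tail.

Lemma abelian_square_free_run_pair : abelian_square_free (run ++ 1 :: run ++ [:: 2]).
Proof.
apply: abelian_square_free_fresh.
- by rewrite mem_iota.
- by rewrite mem_cat mem_iota.
- exact/abelian_square_free_uniq/iota_uniq.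
- by apply: abelian_square_free_uniq; rewrite cats1 rcons_uniq mem_iota iota_uniq.
Qed.

Lemma abelian_square_free_crucial_tail : abelian_square_free crucial_tail.
Proof.
apply: (@abelian_square_free_cat_cons _ [:: k + 3]).
- exact: abelian_square_free_small.
- exact: abelian_square_free_run_pair.
move=> x' y' /suffixW/leq_count_infix cx'.
case/prefix_cat_cons => [/prefixW/leq_count_infix cy'|[t -> /prefixW/leq_count_infix ct]].
  exists 2; suff -> : count_mem 2 (x' ++ 2 :: y') = 1 by [].
  have := cx' (pred1 2); have := cy' (pred1 2).
  by rewrite !(count_cat, count_cons, count_iota) /=; lia.
exists 1; suff -> : count_mem 1 (x' ++ 2 :: run ++ 1 :: t) = 1 by [].
have := cx' (pred1 1); have := ct (pred1 1).
by rewrite !(count_cat, count_cons, count_iota) /=; lia.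
Qed.

Lemma odd_count_stairs_crossing x' y' :
  suffix x' (stairs 3 k) -> prefix y' crucial_tail ->
  exists a, odd (count_mem a (x' ++ 1 :: y')).
Proof.
move=> sx'; have cx' P := leq_count_infix P (suffixW sx').
case/(@prefix_cat_cons _ _ ((k + 3) :: 2 :: run)) => [/prefixW/leq_count_infix cy'|[t -> pt]].
  exists 1; suff -> : count_mem 1 (x' ++ 1 :: y') = 1 by [].
  have := cx' (pred1 1); have := cy' (pred1 1).
  by rewrite !(count_cat, count_cons, count_iota, count_stairs) /=; lia.
case/prefix_cat_cons: pt => [/prefixW/leq_count_infix ct|[t' -> /[!prefixs0]/eqP->]].
  exists 2; suff -> : count_mem 2 (x' ++ 1 :: (k + 3) :: 2 :: run ++ 1 :: t) = 1 by [].
  have := cx' (pred1 2); have := ct (pred1 2).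
  by rewrite !(count_cat, count_cons, count_iota, count_stairs) /=; lia.
(* [y'] is all of [crucial_tail]; some letter of [x'] now occurs three times. *)
have [-> | ne_x'] := eqVneq x' [::].
  exists (k + 3).
  by rewrite !(count_cat, count_cons, count_iota) /= eqxx; lia.
have [j range_j cj] : exists2 j, 3 <= j < 3 + k & count_mem j x' = 1.
  move: sx' ne_x'; rewrite suffixE -size_eq0 => /eqP <-; rewrite size_drop size_stairs.
  by move=> ne; apply: stairs_drop_single; lia.
exists j; suff -> : count_mem j (x' ++ 1 :: crucial_tail) = 3 by [].
by rewrite !(count_cat, count_cons, count_iota) cj /=; lia.
Qed.

Lemma abelian_square_free_crucial_word : abelian_square_free crucial_word.
Proof.
apply: (@abelian_square_free_fresh _ [:: 3]).
- by [].
- by apply/count_memPn; rewrite !(count_cat, count_cons, count_iota, count_stairs) /=; lia.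
- exact: abelian_square_free_small.
apply: abelian_square_free_cat_cons.
- exact: abelian_square_free_stairs.
- exact: abelian_square_free_crucial_tail.
- exact: odd_count_stairs_crossing.
Qed.

Lemma crucial_word_rcons x : x < k + 4 ->
  exists u, infix u (rcons crucial_word x) /\ abelian_square u.
Proof.
case: x => [|[|[|j]]] lt_j.
- apply: (@ends_with_abelian_square _ _ [::] (3 :: 0 :: stairs 3 k ++ [:: 1; k + 3; 2])
                     (run ++ 1 :: run ++ [:: 2; 0])).
  + by [].
  + by rewrite /run.
  + by move=> y; rewrite !(count_cat, count_cons, count_iota, count_stairs) /=; lia.
  + by rewrite /crucial_word /crucial_tail -cats1 /=; do ?rewrite -catA /=.
- apply: (@ends_with_abelian_square _ _ (3 :: 0 :: stairs 3 k ++ [:: 1; k + 3])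
                                    (2 :: run ++ [:: 1]) (run ++ [:: 2; 1])).
  + by [].
  + by rewrite /run.
  + by move=> y; rewrite !(count_cat, count_cons, count_iota) /=; lia.
  + by rewrite /crucial_word /crucial_tail -cats1 /=; do ?rewrite -catA /=.
- apply: (@ends_with_abelian_square _ _
           (3 :: 0 :: stairs 3 k ++ 1 :: (k + 3) :: 2 :: run ++ 1 :: run) [:: 2] [:: 2]) => //.
  by rewrite /crucial_word /crucial_tail -cats1 /=; do ?rewrite -catA /=.
have le_jk : j <= k by lia.
apply: (@ends_with_abelian_square _ _ (3 :: 0 :: stairs 3 j)
    (stairs (3 + j) (k - j) ++ [:: 1; k + 3; 2] ++ iota 3 j.+1)
    (iota (4 + j) (k - j) ++ 1 :: run ++ [:: 2; j.+3])).
- by apply/eqP; rewrite -size_eq0 !size_cat size_stairs /=; lia.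
- by apply/eqP; rewrite -size_eq0 !size_cat size_iota /=; lia.
- by move=> y; rewrite !(count_cat, count_cons, count_iota, count_stairs) /=; lia.
rewrite /crucial_word /crucial_tail.
have -> : stairs 3 k = stairs 3 j ++ stairs (3 + j) (k - j) by rewrite -stairsD subnKC.
have {1}-> : run = iota 3 j.+1 ++ iota (4 + j) (k - j).
  by rewrite /run -iotaD; congr iota; lia.
by rewrite -cats1 /=; do ?rewrite -catA /=.
Qed.

End CrucialWord.

Lemma size_crucial_word k : size (crucial_word k) = 4 * (k + 4) - 7.
Proof.
rewrite /crucial_word /crucial_tail /run /=; do ?rewrite size_cat /=.
by rewrite !size_iota size_stairs; lia.
Qed.

Lemma crucial_word_letters k x : x \in crucial_word k -> x < k + 4.
Proof.
apply: contraLR.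
rewrite -leqNgt -has_pred1 has_count -leqNgt leqn0 => le_x; apply/eqP.
rewrite /crucial_word /crucial_tail /run.
by rewrite !(count_cat, count_cons, count_iota, count_stairs) /=; lia.
Qed.

Lemma crucial_nat_word n : 3 <= n -> exists W : seq nat,
  [/\ size W = 4 * n - 7, all (fun x => x < n) W, abelian_square_free W &
      forall x, x < n -> exists u, infix u (rcons W x) /\ abelian_square u].
Proof.
case: (ltngtP n 3) => [|lt3n|->] // _.
  have n4 : n - 4 + 4 = n by lia.
  exists (crucial_word (n - 4)); split.
  - by rewrite size_crucial_word n4.
  - by apply/allP => x /crucial_word_letters; lia.
  - exact: abelian_square_free_crucial_word.
  - by move=> x lt_x; apply: crucial_word_rcons; lia.
exists [:: 0; 1; 2; 0; 2]; split=> //.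
  apply: (@abelian_square_free_fresh _ [:: 0] 1 [:: 2; 0; 2]) => //.
    exact: abelian_square_free_small.
  by apply: (@abelian_square_free_fresh _ [:: 2] 0 [:: 2]) => //;
     apply: abelian_square_free_small.
case=> [|[|[|]]] // _.
- by apply: (@ends_with_abelian_square _ _ [:: 0; 1] [:: 2; 0] [:: 2; 0]).
- apply: (@ends_with_abelian_square _ _ [::] [:: 0; 1; 2] [:: 0; 2; 1]) => //.
  by move=> y /=; lia.
- by apply: (@ends_with_abelian_square _ _ [:: 0; 1; 2; 0] [:: 2] [:: 2]).
Qed.

Section S2Words.
Variable n : nat.
Implicit Types u w : word n.

Lemma in_S2E u : in_S2 u <-> abelian_square u.
Proof.
split=> -[X [Y]].
  case=> nX [nY [-> cXY]]; exists X, Y.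
  by split=> //; apply/allP => a _; apply/eqP.
case=> nX nY -> /permP pXY; exists X, Y.
by do !split=> //; move=> a; apply: pXY.
Qed.

Lemma has_S2_subwordE w :
  has_S2_subword w <-> exists u, infix u w /\ abelian_square u.
Proof. by split=> -[u [uw /in_S2E sq_u]]; exists u. Qed.

Lemma crucial_S2E w : crucial_S2 w <->
  abelian_square_free w /\ forall a, exists u, infix u (rcons w a) /\ abelian_square u.
Proof.
rewrite /crucial_S2 /free_S2; split=> -[free_w ext_w]; split.
- by move=> u uw sq_u; apply: free_w; apply/has_S2_subwordE; exists u.
- by move=> a; apply/has_S2_subwordE.
- by case/has_S2_subwordE => u [uw sq_u]; apply: free_w uw sq_u.
- by move=> a; apply/has_S2_subwordE.
Qed.

End S2Words.

Lemma crucial_S2_twice_letters_size n (w : word n) a b c :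
  crucial_S2 w -> [/\ a != b, a != c & b != c] ->
  count_mem a w = 2 -> count_mem b w = 2 -> count_mem c w = 2 ->
  4 * n <= size w + 6.
Proof.
case/crucial_S2E => free_w ext_w distinct ca cb cc.
by rewrite -[n in 4 * n]card_ord; apply: crucial_twice_letters_size distinct ca cb cc.
Qed.

Lemma exists_crucial_S2 n :
  3 <= n -> exists2 v : word n, crucial_S2 v & size v = 4 * n - 7.
Proof.
case: n => // n /crucial_nat_word[W [size_W letters_W free_W ext_W]].
have valK : map val (map (@inord n) W) = W.
  rewrite -map_comp map_id_in // => x /(allP letters_W) /= lt_x; exact: inordK.
exists (map (@inord n) W); last by rewrite size_map.
apply/crucial_S2E; split.
  by apply: (@abelian_square_free_map _ _ val); rewrite valK.
move=> a; have [u [/infixP[p [q eW]] sq_u]] := ext_W a (ltn_ord a).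
exists (map (@inord n) u); split; last exact: abelian_square_map.
apply/infixP; exists (map (@inord n) p), (map (@inord n) q).
by rewrite -[a]inord_val -map_rcons eW !map_cat.
Qed.

Lemma distinct3_card (T : finType) (a b c : T) :
  [/\ a != b, a != c & b != c] -> 3 <= #|T|.
Proof.
case=> ab ac bc; have uniq_abc : uniq [:: a; b; c] by rewrite /= !inE !negb_or ab ac bc.
by rewrite -[3]/(size [:: a; b; c]) -(card_uniqP uniq_abc); apply: max_card.
Qed.

Theorem proposition1 (n : nat) (hn : 0 < n) (w : word n) :
  minimal_crucial_S2 w ->
  ~ (exists a b c : 'I_n,
        [/\ a != b, a != c & b != c] /\
        [/\ count_mem a w = 2, count_mem b w = 2 & count_mem c w = 2]).
Proof.
move=> [crucial_w minimal_w] [a [b [c [distinct [ca cb cc]]]]].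
have lower := crucial_S2_twice_letters_size crucial_w distinct ca cb cc.
have := distinct3_card distinct; rewrite card_ord => n_ge3.
have [v crucial_v size_v] := exists_crucial_S2 n_ge3.
by have := minimal_w v crucial_v; rewrite size_v; lia.
Qed.
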